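(* Let $k$ be a positive integer and $m,n$ nonnegative integers. Let $r:=m \bmod k$ and $s:=n \bmod k$. Then \[ \nu_k(K_{m,n}) \le \frac{(m-r)(n-s)}{4k^2}(m-k+r)(n-k+s) \le \frac{1}{k^2}\binom{m}{2}\binom{n}{2}. \]
   Context: A book with $k$ pages consists of a line (the spine) and $k$ half-planes (the pages) whose common boundary is the spine. A $k$-page drawing of a graph places all vertices on the spine and draws each edge inside a single page (edges may cross). The $k$-page crossing number $\nu_k(G)$ is the minimum number of crossings over all $k$-page drawings of $G$. *)

From mathcomp Require Import all_boot all_order all_algebra all_fingroup.
Set Implicit Arguments. Unset Strict Implicit. Unset Printing Implicit Defensive.

Definition Kvert (m n : nat) : finType := ('I_m + 'I_n)%type.
Definition Kedge (m n : nat) : finType := ('I_m * 'I_n)%type.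

Definition Kend1 m n (e : Kedge m n) : Kvert m n := inl e.1.
Definition Kend2 m n (e : Kedge m n) : Kvert m n := inr e.2.

(* A k-page drawing (book drawing): a linear order of the vertices along the
   spine (given by a permutation of the vertices followed by the canonical
   enumeration, so every linear order occurs), and an assignment of each edge
   to one of the k pages. *)
Definition drawing (k m n : nat) : finType :=
  (prod {perm Kvert m n} {ffun Kedge m n -> 'I_k}).

Definition spos k m n (D : drawing k m n) (v : Kvert m n) : nat :=
  enum_rank (D.1 v).

Definition elo k m n (D : drawing k m n) (e : Kedge m n) : nat :=
  minn (spos D (Kend1 e)) (spos D (Kend2 e)).
Definition ehi k m n (D : drawing k m n) (e : Kedge m n) : nat :=
  maxn (spos D (Kend1 e)) (spos D (Kend2 e)).

(* Each crossing unordered pair is counted by exactly one ordered pair. *)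
Definition bcross k m n (D : drawing k m n) (e f : Kedge m n) : bool :=
  (D.2 e == D.2 f) && (elo D e < elo D f < ehi D e) && (ehi D e < ehi D f).

Definition crossings k m n (D : drawing k m n) : nat :=
  #|[set p : Kedge m n * Kedge m n | bcross D p.1 p.2]|.

(* The seed #|Kedge m n|^2 is an upper bound on the crossings of
   every drawing, so for k >= 1 (drawings exist) it does not affect the min. *)
Definition nu_K (k m n : nat) : nat :=
  \big[minn/(#|Kedge m n| ^ 2)%N]_(D : drawing k m n) crossings D.

From mathcomp Require Import all_boot all_order all_algebra all_fingroup zify ring.
Import Order.TTheory GRing.Theory Num.Theory.
Set Implicit Arguments. Unset Strict Implicit. Unset Printing Implicit Defensive.

(* Put the vertices of K_{m,n} on the spine grouped by residue class mod k, in
   the order (left class 0, right class 0, left class 1, right class 1, ...),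
   each group increasing, and put the edge (i, j) on page (i + j) mod k.  Two
   edges on a common page then cross only when their left ends, resp. right
   ends, are increasing pairs of the same residue class, so there are at most
   P(m) P(n) crossings, where P(m) = sum_(i < m) floor(i / k) counts the pairs
   i < i' < m with i = i' mod k.  Writing m = q k + r gives
   2 k P(m) = (m - r)(m - k + r), the first bound; the second is
   k P(m) <= sum_(i < m) i = C(m, 2). *)

Lemma ltn_lexD N a b u w : u < N -> w < N ->
  (a * N + u < b * N + w) = (a < b) || ((a == b) && (u < w)).
Proof.
move=> uN wN; case: (ltngtP a b) => [ab | ba | ->] /=; last by rewrite ltn_add2l.
- have : a.+1 * N <= b * N by rewrite leq_mul2r ab orbT.
  rewrite mulSn; lia.
- have : b.+1 * N <= a * N by rewrite leq_mul2r ba orbT.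
  rewrite mulSn; lia.
Qed.

Lemma eq_lexD N a b u w : u < N -> w < N ->
  a * N + u = b * N + w -> a = b /\ u = w.
Proof.
move=> uN wN eq_ab; have N_gt0 : 0 < N by apply: leq_ltn_trans uN.
split; [move: (congr1 (divn^~ N) eq_ab) | move: (congr1 (modn^~ N) eq_ab)].
  by rewrite /= !divnMDl // !divn_small // !addn0.
by rewrite /= !modnMDl !modn_small.
Qed.

Lemma ltn_div_eqmod k a b : a < b -> a = b %[mod k] -> a %/ k < b %/ k.
Proof.
move=> ab eq_mod; rewrite ltn_neqAle leq_div2r ?andbT; last exact: ltnW.
by apply: contraTneq ab => eq_div; rewrite (divn_eq a k) (divn_eq b k) eq_div eq_mod ltnn.
Qed.

Lemma eqmod_small_diff k a b : a <= b < a + k -> a = b %[mod k] -> a = b.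
Proof.
case/andP=> /subnKC <-; rewrite ltn_add2l => dk.
by rewrite -{1}[a]addn0 => /eqP; rewrite eqn_modDl mod0n modn_small // => /eqP <-; rewrite addn0.
Qed.

Definition interleaved (a b a' b' : nat) : bool :=
  [&& minn a b < minn a' b', minn a' b' < maxn a b & maxn a b < maxn a' b'].

Definition weakly_interleaved (a b a' b' : nat) : bool :=
  [&& minn a b <= minn a' b', minn a' b' <= maxn a b & maxn a b <= maxn a' b'].

Section OrderTransfer.
Variables (V : Type) (f g : V -> nat).

Section SameOrder.
Hypothesis fg : forall v w, (f v < f w) = (g v < g w).

Lemma minn_same_order a b : minn (f a) (f b) = f (if g a < g b then a else b).
Proof. by rewrite /minn fg; case: ifP. Qed.

Lemma maxn_same_order a b : maxn (f a) (f b) = f (if g a < g b then b else a).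
Proof. by rewrite /maxn fg; case: ifP. Qed.

Lemma interleaved_same_order a b a' b' :
  interleaved (f a) (f b) (f a') (f b') = interleaved (g a) (g b) (g a') (g b').
Proof.
by rewrite /interleaved !minn_same_order !maxn_same_order !fg /minn /maxn !(fun_if g).
Qed.
End SameOrder.

Section Coarser.
Hypothesis gf : forall v w, f v < f w -> g v <= g w.

Lemma minn_coarser a b w : minn (f a) (f b) < f w -> minn (g a) (g b) <= g w.
Proof.
rewrite /minn; case: ifP => _ /gf; first exact: leq_trans (geq_minl _ _).
exact: leq_trans (geq_minr _ _).
Qed.

Lemma maxn_coarser a b w : f w < maxn (f a) (f b) -> g w <= maxn (g a) (g b).
Proof.
rewrite /maxn; case: ifP => _ /gf le; first exact: leq_trans le (leq_maxr _ _).
exact: leq_trans le (leq_maxl _ _).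
Qed.

Lemma weakly_interleaved_coarser a b a' b' :
  interleaved (f a) (f b) (f a') (f b') -> weakly_interleaved (g a) (g b) (g a') (g b').
Proof.
case/and3P=> lo lohi hi; apply/and3P; split.
- by rewrite leq_min !(minn_coarser (leq_trans lo _)) ?geq_minl ?geq_minr.
- move: lohi; rewrite {1}/minn; case: ifP => _ /maxn_coarser;
    [exact: leq_trans (geq_minl _ _) | exact: leq_trans (geq_minr _ _)].
- by rewrite geq_max !(maxn_coarser (leq_ltn_trans _ hi)) ?leq_maxl ?leq_maxr.
Qed.
End Coarser.
End OrderTransfer.

Lemma interleaved_ends a b a' b' :
  interleaved a b a' b' -> (a < b) = (a' < b') -> (a < a') && (b < b').
Proof. rewrite /interleaved; case: (ltngtP a b); case: (ltngtP a' b'); lia. Qed.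

Lemma arcs_same_class k x y x' y' : x < k -> y < k -> x' < k -> y' < k ->
  x + y = x' + y' %[mod k] ->
  weakly_interleaved x.*2 y.*2.+1 x'.*2 y'.*2.+1 -> x = x' /\ y = y'.
Proof.
move=> xk yk xk' yk' eqm /and3P[lo mid hi].
(* The interleaving forces x + y <= x' + y' < x + y + k. *)
have eqxy : x + y = x' + y'.
  by apply: eqmod_small_diff eqm; apply/andP; split; lia.
lia.
Qed.

Section SpineOrder.
Variables (T : finType) (key : T -> nat).
Hypothesis key_inj : injective key.

Definition key_rank (v : T) : nat := #|[set w | key w < key v]|.

Lemma key_rank_lt_card v : key_rank v < #|T|.
Proof.
apply: (@leq_trans #|v |: [set w | key w < key v]|).
  by rewrite cardsU1 inE ltnn.
by rewrite -cardsT subset_leq_card ?subsetT.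
Qed.

Lemma ltn_key_rank v w : (key_rank v < key_rank w) = (key v < key w).
Proof.
have sub u u' : key u <= key u' -> [set x | key x < key u] \subset [set x | key x < key u'].
  by move=> le; apply/subsetP => x; rewrite !inE => /leq_trans; apply.
case: (ltnP (key v) (key w)) => [lt | le]; last first.
  by apply: negbTE; rewrite -leqNgt; apply/subset_leq_card/sub.
apply: proper_card; apply/properP; split; first exact/sub/ltnW.
by exists v; rewrite !inE ?ltnn.
Qed.

Lemma key_rank_inj : injective key_rank.
Proof.
move=> v w eq_rk; apply: key_inj.
by case: (ltngtP (key v) (key w)); rewrite // -ltn_key_rank eq_rk ltnn.
Qed.

Definition spine_fun (v : T) : T := enum_val (Ordinal (key_rank_lt_card v)).

Lemma spine_fun_inj : injective spine_fun.
Proof. by move=> v w /enum_val_inj /(congr1 val) /key_rank_inj. Qed.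

Definition spine_perm : {perm T} := perm spine_fun_inj.

Lemma enum_rank_spine_perm v : enum_rank (spine_perm v) = key_rank v :> nat.
Proof. by rewrite permE /spine_fun enum_valK. Qed.
End SpineOrder.

Section ResidueDrawing.
Variables (k m n : nat).
Hypothesis k_gt0 : 0 < k.

Definition vcode (v : Kvert m n) : nat :=
  match v with inl i => (i %% k).*2 | inr j => (j %% k).*2.+1 end.
Definition vidx (v : Kvert m n) : nat :=
  match v with inl i => i | inr j => j end.
Definition vkey (v : Kvert m n) : nat := vcode v * (m + n) + vidx v.

Lemma vidx_lt v : vidx v < m + n.
Proof. by case: v => [i|j] /=; [rewrite ltn_addr | rewrite ltn_addl]. Qed.

Lemma ltn_vkey v w :
  (vkey v < vkey w) = (vcode v < vcode w) || ((vcode v == vcode w) && (vidx v < vidx w)).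
Proof. exact: ltn_lexD (vidx_lt v) (vidx_lt w). Qed.

Lemma vkey_inj : injective vkey.
Proof.
move=> v w /eq_lexD[||eq_code eq_idx]; rewrite ?vidx_lt //.
case: v w eq_code eq_idx => [i|j] [i'|j'] /=; try by move/(congr1 odd); rewrite /= !odd_double.
- by move=> _ /val_inj ->.
- by move=> _ /val_inj ->.
Qed.

Lemma vcode_ltn_vkey v w : vkey v < vkey w -> vcode v <= vcode w.
Proof. by rewrite ltn_vkey => /orP[/ltnW | /andP[/eqP -> _]]. Qed.

Lemma ltn_vkey_side (i : 'I_m) (j : 'I_n) :
  (vkey (inl i) < vkey (inr j)) = (i %% k <= j %% k).
Proof.
rewrite ltn_vkey /= ltnS leq_double.
suff -> : ((i %% k).*2 == (j %% k).*2.+1) = false by rewrite orbF.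
by apply/eqP => /(congr1 odd); rewrite /= !odd_double.
Qed.

Definition residue_drawing : drawing k m n :=
  (spine_perm vkey_inj, [ffun e : Kedge m n => Ordinal (ltn_pmod (e.1 %% k + e.2 %% k) k_gt0)]).

Lemma ltn_spos v w :
  (spos residue_drawing v < spos residue_drawing w) = (vkey v < vkey w).
Proof. by rewrite /spos !enum_rank_spine_perm ltn_key_rank. Qed.

Lemma bcross_residue_drawing (e f : Kedge m n) : bcross residue_drawing e f ->
  [&& e.1 < f.1, e.2 < f.2, e.1 == f.1 %[mod k] & e.2 == f.2 %[mod k]].
Proof.
case: e f => [i j] [i' j'] /andP[/andP[page /andP[lo mid]] hi] /=.
have cross : interleaved (vkey (inl i)) (vkey (inr j)) (vkey (inl i')) (vkey (inr j')).
  by rewrite -(interleaved_same_order ltn_spos); apply/and3P.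
have [eq_i eq_j] : i %% k = i' %% k /\ j %% k = j' %% k.
  apply: (arcs_same_class (ltn_pmod _ k_gt0) (ltn_pmod _ k_gt0) (ltn_pmod _ k_gt0) (ltn_pmod _ k_gt0)).
    by move: page; rewrite !ffunE => /eqP/(congr1 val).
  exact: (weakly_interleaved_coarser vcode_ltn_vkey cross).
have same_side : (vkey (inl i) < vkey (inr j)) = (vkey (inl i') < vkey (inr j')).
  by rewrite !ltn_vkey_side eq_i eq_j.
have /andP[lt_i lt_j] := interleaved_ends cross same_side.
by move: lt_i lt_j; rewrite !ltn_vkey /= eq_i eq_j !ltnn !eqxx /= => -> ->.
Qed.
End ResidueDrawing.

Definition class_pairs (k m : nat) : {set 'I_m * 'I_m} :=
  [set p : 'I_m * 'I_m | (p.1 < p.2) && (p.1 == p.2 %[mod k])].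

Lemma crossings_residue_drawing k m n (k_gt0 : 0 < k) :
  crossings (residue_drawing m n k_gt0) <= #|class_pairs k m| * #|class_pairs k n|.
Proof.
rewrite /crossings -cardsX.
pose split_pair (p : Kedge m n * Kedge m n) := ((p.1.1, p.2.1), (p.1.2, p.2.2)).
have split_inj : injective split_pair by move=> [[? ?] [? ?]] [[? ?] [? ?]] [-> -> -> ->].
rewrite -(card_imset _ split_inj) subset_leq_card //.
apply/subsetP => _ /imsetP[[e f] + ->]; rewrite !inE => /bcross_residue_drawing.
by case/and4P=> lt1 lt2 eq1 eq2; rewrite /= lt1 lt2 eq1 eq2.
Qed.

Lemma card_lt_eqmod_le k m (i0 : 'I_m) :
  #|[set i : 'I_m | (i < i0) && (i == i0 %[mod k])]| <= i0 %/ k.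
Proof.
rewrite cardE -(size_map (fun i : 'I_m => i %/ k)) -[X in _ <= X](size_iota 0).
apply: uniq_leq_size => [|_ /mapP[i + ->]].
  rewrite map_inj_in_uniq ?enum_uniq // => i i'.
  rewrite !mem_enum !inE => /andP[_ /eqP eq_i] /andP[_ /eqP eq_i'] eq_div.
  by apply: val_inj; rewrite /= (divn_eq i k) (divn_eq i' k) eq_div eq_i eq_i'.
by rewrite mem_enum inE mem_iota => /andP[lt /eqP eq_mod]; rewrite ltn_div_eqmod.
Qed.

Lemma card_class_pairs_le k m : #|class_pairs k m| <= \sum_(0 <= i < m) i %/ k.
Proof.
rewrite big_mkord -sum1_card big_mkcond /=.
rewrite (eq_bigr (fun p => if (p.1, p.2) \in class_pairs k m then 1 else 0)); last by case.
rewrite -(pair_bigA _ (fun i i0 => if (i, i0) \in class_pairs k m then 1 else 0)).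
rewrite exchange_big /=; apply: leq_sum => i0 _.
rewrite -big_mkcond sum1_card; apply: leq_trans (card_lt_eqmod_le k i0).
apply/subset_leq_card/subsetP => i mem_i.
by have : (i, i0) \in class_pairs k m := mem_i; rewrite !inE.
Qed.

Lemma double_sum_divn k n : 0 < k ->
  2 * \sum_(0 <= i < n) i %/ k + n %/ k * k = n %/ k * (k * (n %/ k) + 2 * (n %% k)).
Proof.
move=> k_gt0; elim: n => [|n IHn]; first by rewrite big_nil div0n.
rewrite big_nat_recr //=; move: IHn.
have := divn_eq n k; have := ltn_pmod n k_gt0.
set q := n %/ k; set r := n %% k; set S := \sum_(0 <= i < n) _.
move=> r_lt n_eq IHn; rewrite n_eq -addnS.
have [rk | k_le] := ltnP r.+1 k.
  by rewrite divnMDl // divn_small // modnMDl modn_small // addn0; nia.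
have r1k : r.+1 = k by apply/eqP; rewrite eqn_leq r_lt k_le.
by rewrite r1k -mulSnr mulnK // modnMl; rewrite -r1k in IHn *; nia.
Qed.

Lemma sum_divn_le_bin2 k n : k * \sum_(0 <= i < n) i %/ k <= 'C(n, 2).
Proof.
rewrite -bin2_sum big_distrr /=; apply: leq_sum => i _.
by rewrite mulnC leq_trunc_div.
Qed.

Lemma nu_K_le_crossings k m n (D : drawing k m n) : nu_K k m n <= crossings D.
Proof.
rewrite /nu_K; elim: (index_enum _) (mem_index_enum D) => [//|D' s IHs].
rewrite in_cons big_cons => /orP[/eqP <- | D_s]; first exact: geq_minl.
exact: leq_trans (geq_minr _ _) (IHs D_s).
Qed.

Local Open Scope ring_scope.

Lemma sum_divn_natrE (R : comRingType) k n : (0 < k)%N ->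
  2 * k%:R * (\sum_(0 <= i < n) i %/ k)%:R
    = (n%:R - (n %% k)%:R) * (n%:R - k%:R + (n %% k)%:R) :> R.
Proof.
move=> k_gt0; have eq_S := double_sum_divn n k_gt0; have eq_n := divn_eq n k.
set q := (n %/ k)%N in eq_S eq_n *; set r := (n %% k)%N in eq_S eq_n *.
set S := (\sum_(0 <= i < n) _)%N in eq_S *.
have eq_SR : 2 * S%:R + q%:R * k%:R = q%:R * (k%:R * q%:R + 2 * r%:R) :> R.
  by rewrite -!natrM -!natrD -natrM eq_S.
transitivity (k%:R * (2 * S%:R + q%:R * k%:R) - q%:R * k%:R * k%:R : R); first ring.
by rewrite eq_SR eq_n natrD natrM; ring.
Qed.

Theorem theorem6 (k m n : nat) (hk : (0 < k)%N) :
  ((nu_K k m n)%:R : rat)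
    <= ((m%:R - (m %% k)%:R) * (n%:R - (n %% k)%:R)) / (4 * k%:R ^+ 2)
       * ((m%:R - k%:R + (m %% k)%:R) * (n%:R - k%:R + (n %% k)%:R))
  /\ ((m%:R - (m %% k)%:R) * (n%:R - (n %% k)%:R)) / (4 * k%:R ^+ 2)
       * ((m%:R - k%:R + (m %% k)%:R) * (n%:R - k%:R + (n %% k)%:R))
    <= ('C(m, 2))%:R * ('C(n, 2))%:R / k%:R ^+ 2 :> rat.
Proof.
set Sm := (\sum_(0 <= i < m) i %/ k)%N; set Sn := (\sum_(0 <= i < n) i %/ k)%N.
have nu_le : (nu_K k m n <= Sm * Sn)%N.
  apply: leq_trans (nu_K_le_crossings (residue_drawing m n hk)) _.
  apply: leq_trans (crossings_residue_drawing m n hk) _.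
  exact: leq_mul (card_class_pairs_le k m) (card_class_pairs_le k n).
have k_neq0 : k%:R != 0 :> rat by rewrite pnatr_eq0 -lt0n.
have -> : ((m%:R - (m %% k)%:R) * (n%:R - (n %% k)%:R)) / (4 * k%:R ^+ 2)
       * ((m%:R - k%:R + (m %% k)%:R) * (n%:R - k%:R + (n %% k)%:R)) = (Sm * Sn)%:R :> rat.
  by rewrite mulrAC mulrACA -!sum_divn_natrE // natrM; field.
split; first by rewrite ler_nat.
rewrite ler_pdivlMr ?exprn_gt0 ?ltr0n // -natrX -!natrM ler_nat.
by rewrite mulnC -[(k ^ 2)%N]/(k * k)%N mulnACA leq_mul ?sum_divn_le_bin2.
Qed.
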